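(* Let $X \subset \mathbb{R}^{2n}$ be a symplectically self-polar convex body with $C^1$-smooth boundary, and let $T$ be the symplectic outer billiard map of $X$. Then for every $x\in\partial X$ the four points $$z_1=x+f(x),\quad z_2=-x+f(x),\quad z_3=-x-f(x),\quad z_4=x-f(x)$$ are the vertices of a parallelogram of symplectic area $4$, and they form a centrally symmetric closed orbit of $T$: $Tz_i=z_{i+1}$ for $i=1,\dots,4$, with $z_5=z_1$.
   Context: $\mathbb{R}^{2n}\cong\mathbb{C}^n$, $J$ is multiplication by $\sqrt{-1}$, $\omega(u,v)=\langle Ju,v\rangle$. For a convex body $X$ with origin in its interior, $X^\omega=\{y: \omega(x,y)\le 1\ \forall x\in X\}$; $X$ is symplectically self-polar if $X=X^\omega$ (such $X$ is centrally symmetric and, with $C^1$ boundary, strictly convex). For $C^1$ boundary, $f\colon\partial X\to\partial X^\omega$ assigns to $x$ the unique $f(x)\in X^\omega$ with $\omega(x,f(x))=1$. The characteristic line of $\partial X$ at $x$ is $\ker(\omega|_{T_x\partial X})$, spanned by $Jn(x)$ where $n(x)$ is the outer unit normal. Symplectic outer billiard map: for a strictly convex body $X$ with $C^1$ boundary and $z\in\mathbb{R}^{2n}\setminus X$, there is a unique $x\in\partial X$ such that the line through $z$ and $x$ is the characteristic line of $\partial X$ at $x$ and $\omega(x,x-z)>0$; then $T(z)=2x-z$. $T$ is a bijection of $\mathbb{R}^{2n}\setminus X$. *)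

(* R^{2n} = 'rV[R]_(n + n),
   a vector u is (p, q) with p = lsubmx u, q = rsubmx u, identified with
   p + i q in C^n; J (multiplication by i) maps (p, q) to (-q, p). *)
From HB Require Import structures.
From mathcomp Require Import all_boot all_order all_algebra.
From mathcomp Require Import all_classical all_reals all_analysis.
Set Implicit Arguments. Unset Strict Implicit. Unset Printing Implicit Defensive.
Import Order.TTheory GRing.Theory Num.Theory.
Import numFieldNormedType.Exports.
Local Open Scope classical_set_scope.
Local Open Scope ring_scope.

Section Symp.
Variables (R : realType) (n : nat).
Notation V := 'rV[R]_(n + n).

Definition dotp (u v : V) : R := \sum_(i < n + n) u ord0 i * v ord0 i.

Definition Jmap (u : V) : V := row_mx (- rsubmx u) (lsubmx u).

Definition somega (u v : V) : R := dotp (Jmap u) v.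

Definition convex_body0 (X : set V) : Prop :=
  compact X /\
  (forall x y (t : R), X x -> X y -> 0 <= t <= 1 -> X (t *: x + (1 - t) *: y)) /\
  interior X 0.

Definition bdry (X : set V) : set V := closure X `\` interior X.

Definition spolar (X : set V) : set V :=
  [set y | forall x, X x -> somega x y <= 1].

Definition symp_self_polar (X : set V) : Prop := X = spolar X.

Definition C1_boundary (X : set V) : Prop :=
  forall x, bdry X x ->
  exists (U : set V) (phi : V -> R),
    [/\ open U /\ U x,
        (forall y, U y -> differentiable phi y),
        (forall v : V, {within U, continuous (fun y => 'D_v phi y)}),
        (exists v : V, 'D_v phi x != 0) &
        (forall y, U y -> (X y <-> phi y <= 0))].

Definition fpolar (X : set V) (x : V) : V :=
  xget 0 [set y | spolar X y /\ somega x y = 1].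

Definition outer_normal (X : set V) (x u : V) : Prop :=
  u != 0 /\ forall y, X y -> dotp u (y - x) <= 0.

Definition char_line (X : set V) (x : V) : set V :=
  [set v | exists u t, outer_normal X x u /\ v = t *: Jmap u].

Definition billiard_point (X : set V) (z x : V) : Prop :=
  [/\ bdry X x, char_line X x (z - x) & somega x (x - z) > 0].

Definition Tmap (X : set V) (z : V) : V :=
  2%:R *: xget 0 (billiard_point X z) - z.

End Symp.

(* Call (p, q) a polar pair if p lies on the boundary, q lies in X and omega(p, q) = 1.
   Because X is its own symplectic polar, (q, - p) is again a polar pair, and for any
   polar pair -J q is an outer normal at p, so p - q lies on the characteristic line
   through p and T (p - q) = 2 p - (p - q) = p + q.  Rotating (x, f x) four times gives
   the pairs (x, f x), (f x, - x), (- x, - f x), (- f x, x) and hence the orbit.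
   Everything rests on uniqueness (of f x, and of the reflection point of T), which comes
   from C^1 smoothness: at a boundary point every outer normal is a multiple of the
   gradient of a local defining function. *)
From HB Require Import structures.
From mathcomp Require Import all_boot all_order all_algebra.
From mathcomp Require Import all_classical all_reals all_analysis.
From mathcomp Require Import ring lra.
Import Order.TTheory GRing.Theory Num.Theory.
Import numFieldNormedType.Exports.
Local Open Scope classical_set_scope.
Local Open Scope ring_scope.
Set Implicit Arguments. Unset Strict Implicit.

Lemma le0_of_le_pmul (R : realFieldType) (s k : R) :
  (forall e, 0 < e -> s <= e * k) -> s <= 0.
Proof.
move=> hs; have [k0 | k0] := lerP k 0; first by have := hs 1 ltr01; lra.
apply/ler_addgt0Pr => e e0; have := hs (e / k) (divr_gt0 e0 k0).
by rewrite divfK ?gt_eqF // add0r.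
Qed.

Section SymplecticAlgebra.
Variables (R : realType) (n : nat).
Notation V := 'rV[R]_(n + n).
Notation l u i := (u ord0 (lshift n i)).
Notation r u i := (u ord0 (rshift n i)).

Lemma dotpE (u v : V) : dotp u v = \sum_(i < n) (l u i * l v i + r u i * r v i).
Proof. by rewrite /dotp big_split_ord big_split. Qed.

Lemma JmapE (u : V) i : l (Jmap u) i = - r u i /\ r (Jmap u) i = l u i.
Proof. by rewrite /Jmap !mxE (unsplitK (inl i)) (unsplitK (inr i)) /= !mxE. Qed.

Lemma somegaE (u v : V) : somega u v = \sum_(i < n) (l u i * r v i - r u i * l v i).
Proof.
rewrite /somega dotpE; apply: eq_bigr => i _.
by have [-> ->] := JmapE u i; ring.
Qed.

Ltac by_coordinates := rewrite ?somegaE ?dotpE ?mulr_sumr -?big_split -?sumrN /=;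
  apply: eq_bigr => i _; rewrite ?mxE; ring.

Lemma dotpC (u w : V) : dotp w u = dotp u w. Proof. by_coordinates. Qed.
Lemma dotpDr (u v w : V) : dotp w (u + v) = dotp w u + dotp w v. Proof. by_coordinates. Qed.
Lemma dotpNr (u w : V) : dotp w (- u) = - dotp w u. Proof. by_coordinates. Qed.
Lemma dotpNl (u w : V) : dotp (- u) w = - dotp u w. Proof. by_coordinates. Qed.
Lemma dotpZr a (u w : V) : dotp w (a *: u) = a * dotp w u. Proof. by_coordinates. Qed.
Lemma dotp0l (w : V) : dotp 0 w = 0.
Proof. by rewrite /dotp big1 // => i _; rewrite mxE mul0r. Qed.
Lemma dotpZl a (u w : V) : dotp (a *: u) w = a * dotp u w. Proof. by_coordinates. Qed.
Lemma dotpBr (u v w : V) : dotp w (u - v) = dotp w u - dotp w v.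
Proof. by rewrite dotpDr dotpNr. Qed.

Lemma somegaDl (u v w : V) : somega (u + v) w = somega u w + somega v w. Proof. by_coordinates. Qed.
Lemma somegaDr (u v w : V) : somega w (u + v) = somega w u + somega w v. Proof. by_coordinates. Qed.
Lemma somegaNl (u w : V) : somega (- u) w = - somega u w. Proof. by_coordinates. Qed.
Lemma somegaNr (u w : V) : somega w (- u) = - somega w u. Proof. by_coordinates. Qed.
Lemma somegaZl a (u w : V) : somega (a *: u) w = a * somega u w. Proof. by_coordinates. Qed.
Lemma somegaZr a (u w : V) : somega w (a *: u) = a * somega w u. Proof. by_coordinates. Qed.
Lemma somegaC (u w : V) : somega w u = - somega u w. Proof. by_coordinates. Qed.
Lemma somegaxx (u : V) : somega u u = 0.
Proof. by rewrite somegaE big1 // => i _; ring. Qed.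
Lemma somega_cocycle (z a b : V) : somega (z - a) (b - a) + somega (z - b) (a - b) = 0.
Proof. rewrite !somegaE -big_split big1 // => i _ /=; rewrite !mxE; ring. Qed.

Lemma somega_dotpr (u w : V) : somega u w = dotp (- Jmap w) u.
Proof.
rewrite dotpNl somegaE dotpE -sumrN; apply: eq_bigr => i _.
by have [-> ->] := JmapE w i; ring.
Qed.

Lemma JmapK (u : V) : Jmap (Jmap u) = - u.
Proof. by rewrite /Jmap row_mxKl row_mxKr -opp_row_mx hsubmxK. Qed.

Lemma JmapN (u : V) : Jmap (- u) = - Jmap u.
Proof. by rewrite /Jmap !linearN /= opp_row_mx. Qed.

Lemma Jmap_inj : injective (@Jmap R n).
Proof. by move=> u v /(congr1 (@Jmap R n)); rewrite !JmapK => /oppr_inj. Qed.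

Lemma Jmap_eq0 (u : V) : (Jmap u == 0) = (u == 0).
Proof.
apply/eqP/eqP => [Ju0|->]; last by rewrite /Jmap !linear0 row_mx0.
by apply/eqP; rewrite -oppr_eq0 -JmapK Ju0 /Jmap !linear0 row_mx0.
Qed.

Lemma somega_neq0l (u w : V) : somega u w != 0 -> u != 0.
Proof. by apply: contraNneq => ->; rewrite -(scale0r 0) somegaZl mul0r. Qed.

Lemma somega_neq0r (u w : V) : somega u w != 0 -> w != 0.
Proof. by apply: contraNneq => ->; rewrite -(scale0r 0) somegaZr mul0r. Qed.

Lemma dotp_ge0 (u : V) : 0 <= dotp u u.
Proof. by rewrite /dotp sumr_ge0 // => i _; rewrite -expr2 sqr_ge0. Qed.

Lemma dotp_eq0 (u : V) : dotp u u = 0 -> u = 0.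
Proof.
move=> u0; apply/rowP => i; rewrite mxE; apply/eqP; rewrite -sqrf_eq0 expr2.
by apply/eqP; apply: (psumr_eq0P _ u0) => // j _; rewrite -expr2 sqr_ge0.
Qed.

Lemma dotp_gt0 (u : V) : u != 0 -> 0 < dotp u u.
Proof. by move=> u0; rewrite lt_def dotp_ge0 andbT; apply: contra u0 => /eqP/dotp_eq0 ->. Qed.

Lemma dotp_colinear (g a : V) : g != 0 ->
  (forall v, dotp g v < 0 -> dotp a v <= 0) -> exists c, a = c *: g.
Proof.
move=> g0 ha; have gg := dotp_gt0 g0.
pose c := dotp g a / dotp g g; pose w := a - c *: g.
have gw : dotp g w = 0 by rewrite dotpBr dotpZr divfK ?gt_eqF // subrr.
have side (s : R) e : 0 < e -> s * dotp a w <= e * dotp a g.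
  move=> e0; have : dotp a (s *: w - e *: g) <= 0.
    by apply: ha; rewrite dotpBr !dotpZr gw mulr0 sub0r oppr_lt0 mulr_gt0.
  by rewrite dotpBr !dotpZr subr_le0.
have aw : dotp a w = 0.
  have := le0_of_le_pmul (side 1); have := le0_of_le_pmul (side (-1)).
  rewrite mul1r mulN1r; lra.
exists c; apply/eqP; rewrite -subr_eq0; apply/eqP/dotp_eq0.
by rewrite -/w {1}/w dotpC dotpBr dotpZr (dotpC a w) (dotpC g w) aw gw mulr0 subr0.
Qed.

End SymplecticAlgebra.

Lemma near_dnbhs_right (R : numFieldType) (x : R) (P : R -> Prop) :
  (\forall h \near x^', P h) -> \forall h \near x^'+, P h.
Proof. by rewrite !near_withinE; apply: filterS => h Ph /gt_eqF /negbT; exact: Ph. Qed.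
Arguments near_dnbhs_right {R x P}.

Lemma ray_near (R : realFieldType) (V : normedModType R) (p v : V) (U : set V) :
  nbhs p U -> \forall t \near 0^'+, U (t *: v + p).
Proof.
apply: cvg_at_right_filter; rewrite -[X in _ --> X]add0r -(scale0r v).
by apply: cvgD; [apply: cvgZr_tmp; exact: cvg_id | exact: cvg_cst].
Qed.

Section DifferentialSign.
Variables (R : realFieldType) (V : normedModType R) (phi : V -> R) (x v : V).
Hypothesis dphi : differentiable phi x.

Let diff_quotient_cvg :
  (fun h : R => h^-1 *: ((phi \o shift x) (h *: v) - phi x)) @ 0^' --> 'd phi x v.
Proof. by rewrite -deriveE //; exact: diff_derivable. Qed.

Lemma diff_lt0_near : 'd phi x v < 0 -> \forall h \near 0^'+, phi (h *: v + x) < phi x.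
Proof.
move=> Dv; near=> h.
have h0 : 0 < h by near: h; exact: nbhs_right_gt.
suff : h^-1 * (phi (h *: v + x) - phi x) < 0 by rewrite pmulr_rlt0 ?invr_gt0 // subr_lt0.
by near: h; exact: near_dnbhs_right (cvgr_lt _ diff_quotient_cvg 0 Dv).
Unshelve. all: by end_near. Qed.

Lemma diff_gt0_near : 0 < 'd phi x v -> \forall h \near 0^'+, phi x < phi (h *: v + x).
Proof.
move=> Dv; near=> h.
have h0 : 0 < h by near: h; exact: nbhs_right_gt.
suff : 0 < h^-1 * (phi (h *: v + x) - phi x) by rewrite pmulr_rgt0 ?invr_gt0 // subr_gt0.
by near: h; exact: near_dnbhs_right (cvgr_gt _ diff_quotient_cvg 0 Dv).
Unshelve. all: by end_near. Qed.

End DifferentialSign.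

Section PolarDuality.
Variables (R : realType) (n : nat) (X : set 'rV[R]_(n + n)).
Notation V := 'rV[R]_(n + n).

Lemma spolar_outer_normal x a : X x -> spolar X a -> somega x a = 1 ->
  outer_normal X x (- Jmap a).
Proof.
move=> Xx Xa xa; split.
  by rewrite oppr_eq0 Jmap_eq0; apply: (somega_neq0r (u := x)); rewrite xa oner_neq0.
by move=> y Xy; rewrite dotpBr -!somega_dotpr xa subr_le0 Xa.
Qed.

Lemma spolar_bdry p q : X p -> spolar X q -> somega p q = 1 -> bdry X p.
Proof.
move=> Xp Xq pq; split => [|ip]; first exact: subset_closure.
have q0 : q != 0 by apply: (somega_neq0r (u := p)); rewrite pq oner_neq0.
near (0:R)^'+ => t.
have Xt : X (t *: - Jmap q + p) by near: t; exact: ray_near.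
have := Xq _ Xt.
rewrite somegaDl pq somegaZl somegaNl {1}/somega JmapK dotpNl.
have := dotp_gt0 q0; have : 0 < t by near: t; exact: nbhs_right_gt.
nra.
Unshelve. all: by end_near. Qed.

End PolarDuality.

Section ConvexBody.
Variables (R : realType) (n : nat) (X : set 'rV[R]_(n + n)).
Hypothesis hX : convex_body0 X.
Notation V := 'rV[R]_(n + n).

Lemma bdry_subset : bdry X `<=` X.
Proof.
case: hX => cX _ x [+ _]; rewrite -(closure_id X).1 //.
exact: compact_closed (@norm_hausdorff _ _) cX.
Qed.

Lemma outer_normal_gt0 y u : outer_normal X y u -> 0 < dotp u y.
Proof.
case=> u0 hu; case: hX => _ [_ i0].
near (0:R)^'+ => d.
have Xd : X (d *: u) by rewrite -[d *: u]addr0; near: d; exact: ray_near.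
have := hu _ Xd; rewrite dotpBr dotpZr.
have := dotp_gt0 u0; have : 0 < d by near: d; exact: nbhs_right_gt.
nra.
Unshelve. all: by end_near. Qed.

Lemma billiard_point_normal z y : billiard_point X z y -> exists u t,
  [/\ outer_normal X y u, t < 0 & forall w, somega (z - y) w = - t * dotp u w].
Proof.
case=> _ [u [t [nu zy]]] pos; exists u, t.
have zyw w : somega (z - y) w = - t * dotp u w.
  by rewrite zy somegaZl {1}/somega JmapK dotpNl mulrN mulNr.
split => //; move: pos; rewrite -opprB somegaNr somegaC opprK zyw.
by have := outer_normal_gt0 nu; nra.
Qed.

Hypothesis hC1 : C1_boundary X.

Lemma bdry_gradient x : bdry X x -> exists2 g : V, outer_normal X x g &
  forall v, dotp g v < 0 -> \forall h \near 0^'+, X (h *: v + x).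
Proof.
move=> bx; have [U [phi [[oU Ux] dphi _ [v0 Dv0] hUX]]] := hC1 bx.
have nU : nbhs x U by exact: open_nbhs_nbhs.
have dx := dphi x Ux.
have phix : phi x = 0.
  apply/eqP; rewrite eq_le ((hUX x Ux).1 (bdry_subset bx)) /= leNgt; apply/negP => px.
  case: bx => _; apply.
  have := differentiable_continuous dx => /cvgr_lt /(_ _ px) H.
  by apply: filterS (filterI H nU) => y [py Uy]; apply/(hUX y Uy)/ltW.
pose g : V := \row_i 'd phi x (delta_mx 0 i).
have gE v : dotp g v = 'd phi x v.
  rewrite {2}(row_sum_delta v) linear_sum /dotp.
  by apply: eq_bigr => i _; rewrite mxE linearZ /= mulrC.
exists g; last first.
  move=> v; rewrite gE => /(diff_lt0_near dx); rewrite phix => neg.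
  near=> h; apply/(hUX _ _).2; last exact/ltW/(near neg h).
  by near: h; exact: ray_near.
split.
  by apply: contra Dv0 => /eqP g0; rewrite deriveE // -gE g0 dotp0l.
move=> y Xy; rewrite leNgt gE; apply/negP => /(diff_gt0_near dx); rewrite phix => pos.
near (0:R)^'+ => h.
have Xh : X (h *: (y - x) + x).
  have -> : h *: (y - x) + x = h *: y + (1 - h) *: x.
    by rewrite scalerBr scalerBl scale1r addrAC addrA.
  case: hX => _ [convX _]; apply: convX => //; first exact: bdry_subset.
  have h0 : 0 < h by near: h; exact: nbhs_right_gt.
  by rewrite (ltW h0) /=; near: h; exact: nbhs_right_le.
have Uh : U (h *: (y - x) + x) by near: h; exact: ray_near.
by have := (hUX _ Uh).1 Xh; rewrite leNgt (near pos h).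
Unshelve. all: by end_near. Qed.

Lemma outer_normal_unique x : bdry X x -> exists2 g : V, outer_normal X x g &
  forall a, outer_normal X x a -> exists c, a = c *: g.
Proof.
move=> bx; have [g [g0 gnormal] inward] := bdry_gradient bx.
exists g => // a [_ anormal]; apply: dotp_colinear g0 _ => v /inward gv.
near (0:R)^'+ => h.
have Xh : X (h *: v + x) by near: h.
have h0 : 0 < h by near: h; exact: nbhs_right_gt.
by have := anormal _ Xh; rewrite addrK dotpZr pmulr_rle0.
Unshelve. all: by end_near. Qed.

Lemma spolar_unique x a b : bdry X x -> spolar X a -> spolar X b ->
  somega x a = 1 -> somega x b = 1 -> a = b.
Proof.
move=> bx Xa Xb xa xb; have Xx := bdry_subset bx.
have [g _ gunique] := outer_normal_unique bx.
have [ca ea] := gunique _ (spolar_outer_normal Xx Xa xa).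
have [cb eb] := gunique _ (spolar_outer_normal Xx Xb xb).
have coef c u : - Jmap u = c *: g -> somega x u = c * dotp g x.
  by move=> e; rewrite somega_dotpr e dotpZl.
have := coef _ _ ea; have := coef _ _ eb; rewrite xa xb => xcb xca.
have gx : dotp g x != 0 by apply: contra_eq_neq xca => ->; rewrite mulr0 oner_neq0.
have cab : ca = cb by apply: (mulIf gx); rewrite -xca -xcb.
by apply/Jmap_inj/oppr_inj; rewrite ea eb cab.
Qed.

Lemma fpolar_spec x : bdry X x -> spolar X (fpolar X x) /\ somega x (fpolar X x) = 1.
Proof.
move=> bx; apply: (@xgetPex _ 0 [set y | spolar X y /\ somega x y = 1]).
have [g gnormal _] := bdry_gradient bx.
have gx := outer_normal_gt0 gnormal; case: gnormal => _ gnormal.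
exists ((dotp g x)^-1 *: Jmap g); split.
  move=> w Xw; rewrite somegaZr somega_dotpr JmapK opprK ler_pdivrMl // mulr1.
  by have := gnormal _ Xw; rewrite dotpBr subr_le0.
by rewrite somegaZr somega_dotpr JmapK opprK mulVf // gt_eqF.
Qed.

End ConvexBody.

Section SelfPolarBody.
Variables (R : realType) (n : nat) (X : set 'rV[R]_(n + n)).
Hypotheses (hX : convex_body0 X) (hsp : symp_self_polar X) (hC1 : C1_boundary X).
Notation V := 'rV[R]_(n + n).

Lemma self_polar_spolar z : X z -> spolar X z.
Proof. by rewrite -hsp. Qed.

Lemma self_polarN z : X z -> X (- z).
Proof.
move=> Xz; rewrite hsp => w Xw.
by rewrite somegaNr -somegaC; exact: self_polar_spolar.
Qed.

Definition polar_pair (p q : V) := [/\ bdry X p, X q & somega p q = 1].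

Lemma polar_pair_fpolar x : bdry X x -> polar_pair x (fpolar X x).
Proof. by move=> bx; have [fX xf] := fpolar_spec hX hC1 bx; split; rewrite // -hsp in fX. Qed.

Lemma polar_pair_rot p q : polar_pair p q -> polar_pair q (- p).
Proof.
case=> bp Xq pq; have qp : somega q (- p) = 1 by rewrite somegaNr -somegaC.
split => //; last exact/self_polarN/(bdry_subset hX).
exact: spolar_bdry Xq (self_polar_spolar (self_polarN (bdry_subset hX bp))) qp.
Qed.

Lemma polar_pair_notin p q : polar_pair p q -> ~ X (p + q).
Proof.
case=> bp Xq pq Xpq.
have : p + q = q.
  apply: (spolar_unique hX hC1 bp _ _ _ pq); try exact: self_polar_spolar.
  by rewrite somegaDr pq somegaxx add0r.
move/(canRL (addrK q)); rewrite subrr => p0.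
by have := @somega_neq0l _ _ p q; rewrite pq oner_neq0 p0 eqxx => /(_ isT).
Qed.

Lemma polar_pair_billiard_point p q : polar_pair p q -> billiard_point X (p - q) p.
Proof.
case=> bp Xq pq; split => //; last by rewrite subKr pq ltr01.
exists (- Jmap q), (-1); split.
  exact: spolar_outer_normal (bdry_subset hX bp) (self_polar_spolar Xq) pq.
by rewrite addrAC subrr add0r scaleN1r JmapN JmapK opprK.
Qed.

Lemma billiard_point_unique z y1 y2 :
  billiard_point X z y1 -> billiard_point X z y2 -> y1 = y2.
Proof.
move=> b1 b2; have X1 : X y1 by case: b1 => /(bdry_subset hX).
have X2 : X y2 by case: b2 => /(bdry_subset hX).
have [u1 [t1 [n1 t10 e1]]] := billiard_point_normal hX b1.
have [u2 [t2 [n2 t20 e2]]] := billiard_point_normal hX b2.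
have le1 := n1.2 _ X2; have le2 := n2.2 _ X1.
have := somega_cocycle z y1 y2; rewrite e1 e2 => cocycle.
have d0 : dotp u1 (y2 - y1) = 0 by nra.
(* y1 and y2 lie on one supporting hyperplane of X, whose polar point p has both as partners *)
have M0 := outer_normal_gt0 hX n1; set M := dotp u1 y1 in M0.
pose p := M^-1 *: Jmap (- u1).
have pw w : somega p w = M^-1 * dotp u1 w by rewrite somegaZl {1}/somega JmapK opprK.
have Xmp : X (- p).
  rewrite hsp => w Xw; rewrite somegaNr -somegaC pw ler_pdivrMl // mulr1.
  by have := n1.2 _ Xw; rewrite dotpBr subr_le0.
have Xp : X p by rewrite -[p]opprK; exact: self_polarN.
have py1 : somega p y1 = 1 by rewrite pw mulVf ?gt_eqF.
have py2 : somega p y2 = 1.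
  by move/eqP: d0; rewrite pw dotpBr subr_eq0 => /eqP ->; rewrite mulVf ?gt_eqF.
have bp := spolar_bdry Xp (self_polar_spolar X1) py1.
by apply: (spolar_unique hX hC1 bp _ _ py1 py2); exact: self_polar_spolar.
Qed.

Lemma Tmap_polar_pair p q : polar_pair p q -> Tmap X (p - q) = p + q.
Proof.
move=> pq; have bpq := polar_pair_billiard_point pq.
rewrite /Tmap (xget_unique _ bpq) => [|y /billiard_point_unique]; last exact.
by rewrite scaler_nat mulr2n opprB addrC subrKA addrC.
Qed.

End SelfPolarBody.

Theorem theorem3p1 (R : realType) (n : nat) (X : set 'rV[R]_(n + n))
  (hX : convex_body0 X) (hsp : symp_self_polar X) (hC1 : C1_boundary X)
  (x : 'rV[R]_(n + n)) (hx : bdry X x) :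
  let z1 := x + fpolar X x in
  let z2 := - x + fpolar X x in
  let z3 := - x - fpolar X x in
  let z4 := x - fpolar X x in
  [/\ z2 - z1 = z3 - z4,
      somega (z2 - z1) (z4 - z1) = 4%:R,
      z3 = - z1 /\ z4 = - z2,
      ~ X z1 /\ ~ X z2 /\ ~ X z3 /\ ~ X z4 &
      [/\ Tmap X z1 = z2, Tmap X z2 = z3, Tmap X z3 = z4 & Tmap X z4 = z1]].
Proof.
move=> z1 z2 z3 z4; rewrite {}/z1 {}/z2 {}/z3 {}/z4; set f := fpolar X x.
have P1 : polar_pair X x f := polar_pair_fpolar hX hsp hC1 hx.
have P2 := polar_pair_rot hX hsp P1.
have P3 := polar_pair_rot hX hsp P2.
have := polar_pair_rot hX hsp P3; rewrite opprK => P4.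
have [_ _ xf] := P1.
split.
- by apply/rowP => i; rewrite !mxE; ring.
- have -> : - x + f - (x + f) = (-2) *: x by apply/rowP => i; rewrite !mxE; ring.
  have -> : x - f - (x + f) = (-2) *: f by apply/rowP => i; rewrite !mxE; ring.
  by rewrite somegaZl somegaZr xf; ring.
- by rewrite !opprD opprK.
- have := polar_pair_notin hX hsp hC1 P1; have := polar_pair_notin hX hsp hC1 P2.
  have := polar_pair_notin hX hsp hC1 P3; have := polar_pair_notin hX hsp hC1 P4.
  by rewrite [f + _]addrC [- f + _]addrC.
split.
- by rewrite -[x in x + f]opprK addrC (Tmap_polar_pair hX hsp hC1 P2) addrC.
- by rewrite -[f in - x + f]opprK (Tmap_polar_pair hX hsp hC1 P3).
- by rewrite addrC (Tmap_polar_pair hX hsp hC1 P4) addrC.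
- by rewrite (Tmap_polar_pair hX hsp hC1 P1).
Qed.
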